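(* Let $g\ge2$, $d\ge2$, let $\sigma$ be a conjugacy class of $S_d$ of cycle type $(l_1)\cdots(l_m)$ with $\sum l_i=d$ and $\sum(l_i-1)=2g-2$, and let $(1^{a_1}2^{a_2}\cdots d^{a_d})$ be any cycle type of $S_d$. Then there is no pair $(\alpha,\beta)\in S_d\times S_d$ such that $\alpha\beta\alpha^{-1}\beta^{-1}\in\sigma$, $\langle\alpha,\beta\rangle$ is transitive, $\beta$ has cycle type $(1^{a_1}2^{a_2}\cdots d^{a_d})$, and both $\alpha$ and $\beta$ commute with the $d$-cycle $(12\cdots d)$.
   Context: $(1^{a_1}2^{a_2}\cdots d^{a_d})$ denotes the conjugacy class of permutations with $a_i$ cycles of length $i$, $\sum ia_i=d$. *)

From mathcomp Require Import all_boot all_fingroup.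
Set Implicit Arguments. Unset Strict Implicit. Unset Printing Implicit Defensive.
Local Open Scope group_scope.

(* Points 1..d are represented by 'I_d = {0,...,d-1}. *)

Definition cycle_type (T : finType) (s : {perm T}) : seq nat :=
  map (fun X : {set T} => #|X|) (enum (porbits s)).

Definition cycle_count (T : finType) (s : {perm T}) (i : nat) : nat :=
  #|[set X in porbits s | #|X| == i]|.

(* the standard d-cycle (1 2 ... d), i.e. i |-> i+1 mod d on 'I_d *)
Definition dcycle (d : nat) : 'S_d := perm (@ordS_inj d).

From mathcomp Require Import all_boot all_fingroup zify.
Set Implicit Arguments. Unset Strict Implicit. Unset Printing Implicit Defensive.
Local Open Scope group_scope.

(* Both [alpha] and [beta] lie in the centralizer of the d-cycle, which is the
   cyclic group it generates; hence they commute, their commutator is the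
   identity, and the identity has only fixed points.  So every [l_i] equals 1
   and [\sum (l_i - 1) = 0], which is incompatible with [2g - 2 >= 2]. *)

Lemma dcycle_expE (d k : nat) (i : 'I_d) : val ((dcycle d ^+ k) i) = (i + k) %% d.
Proof.
elim: k => [|k IHk]; first by rewrite expg0 perm1 addn0 modn_small.
by rewrite expgSr permM /dcycle permE /= IHk -addn1 modnDml addn1 addnS.
Qed.

Lemma cent_dcycle (d : nat) (x : 'S_d) :
  commute x (dcycle d) -> x \in <[dcycle d]>.
Proof.
case: d x => [|n] x cx.
  by apply/cycleP; exists 0%N; apply/permP => -[].
have c_ord0 (y : 'I_n.+1) : (dcycle n.+1 ^+ y) ord0 = y.
  by apply/val_inj; rewrite dcycle_expE add0n modn_small.
apply/cycleP; exists (x ord0); apply/permP => y.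
rewrite -[in LHS](c_ord0 y) -permM -(commuteX y cx) permM.
by rewrite -[x ord0 in LHS]c_ord0 -[in RHS](c_ord0 y) -!permM -!expgD addnC.
Qed.

Lemma commute_cent_dcycle (d : nat) (x y : 'S_d) :
  commute x (dcycle d) -> commute y (dcycle d) -> commute x y.
Proof.
move=> /cent_dcycle/cycleP[i ->] /cent_dcycle/cycleP[j ->].
exact: commuteX2.
Qed.

Lemma porbit1 (T : finType) (x : T) : porbit 1 x = [set x].
Proof.
apply/setP => y; rewrite inE; apply/porbitP/eqP => [[i ->]|->].
  by rewrite expg1n perm1.
by exists 0%N; rewrite expg0 perm1.
Qed.

Lemma cycle_type1 (T : finType) : all (pred1 1%N) (cycle_type (1 : {perm T})).
Proof.
apply/allP => _ /mapP[_ /[!mem_enum] /imsetP[x _ ->] ->].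
by rewrite /= porbit1 cards1.
Qed.

Theorem mainTheorem11 (g d : nat) (sigma : {set 'S_d}) (l : seq nat)
    (a : nat -> nat) :
  (2 <= g)%N -> (2 <= d)%N ->
  sigma \in classes [set: 'S_d] ->
  (forall x, x \in sigma -> perm_eq (cycle_type x) l) ->
  (\sum_(li <- l) li)%N = d ->
  (\sum_(li <- l) (li - 1))%N = (2 * g - 2)%N ->
  (\sum_(1 <= i < d.+1) i * a i)%N = d ->
  ~ (exists alpha beta : 'S_d,
      [/\ alpha * beta * alpha^-1 * beta^-1 \in sigma,
          [transitive <<[set alpha; beta]>>, on [set: 'I_d] | 'P],
          (forall i, (1 <= i <= d)%N -> cycle_count beta i = a i),
          commute alpha (dcycle d)
        & commute beta (dcycle d)]).
Proof.
move=> g_ge2 _ _ sigma_type _ genus_eq _ [alpha [beta [comm_in _ _ ca cb]]].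
have comm1 : alpha * beta * alpha^-1 * beta^-1 = 1.
  by rewrite (commute_cent_dcycle ca cb) mulgK mulgV.
have l_eq := sigma_type _ comm_in; rewrite comm1 in l_eq.
have : (\sum_(li <- l) (li - 1))%N = 0%N.
  rewrite -(perm_big _ l_eq) big1_seq // => n /andP[_ n_in].
  by rewrite (eqP (allP (cycle_type1 _) n n_in)).
by rewrite genus_eq; lia.
Qed.
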